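(* Let $t\ge 3$ and let $T\in\{1,-1\}^t$. Then $\mathfrak{q}(\mathrm{ro}(T))=\mathfrak{q}(T)$. Moreover, with $T^-:=\{e\in\{1,\ldots,t\}: T(e)=-1\}$: (i) if $|T^-\cap\{1,t\}|=1$, then $\boldsymbol{x}(\mathrm{ro}(T))=\boldsymbol{x}(T)\,\overline{\mathbf{U}}(t)\,\overline{\mathbf{T}}(t)$; (ii) if $|T^-\cap\{1,t\}|=2$, then $\boldsymbol{x}(\mathrm{ro}(T))=\boldsymbol{\sigma}(1)+\boldsymbol{x}(T)\,\overline{\mathbf{U}}(t)\,\overline{\mathbf{T}}(t)$; (iii) if $|T^-\cap\{1,t\}|=0$, then $\boldsymbol{x}(\mathrm{ro}(T))=-\boldsymbol{\sigma}(1)+\boldsymbol{x}(T)\,\overline{\mathbf{U}}(t)\,\overline{\mathbf{T}}(t)$.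
   Context: Vectors are row vectors in $\mathbb{R}^t$; $\boldsymbol{\sigma}(e)$ is the $e$-th standard unit vector, $\mathrm{T}^{(+)}=(1,\ldots,1)$. For $S\subseteq\{1,\ldots,t\}$, ${}_{-S}\mathrm{T}^{(+)}$ denotes the vector with entries $-1$ on $S$ and $1$ elsewhere. Define $R^0:=\mathrm{T}^{(+)}$ and $R^s:={}_{-\{1,\ldots,s\}}\mathrm{T}^{(+)}$ for $1\le s\le t-1$. These form a basis of $\mathbb{R}^t$; for $T\in\{1,-1\}^t$, $\boldsymbol{x}(T)$ denotes the unique vector (it lies in $\{-1,0,1\}^t$) with $T=\sum_{i=1}^t x_iR^{i-1}$, and $\mathfrak{q}(T)$ is the number of nonzero entries of $\boldsymbol{x}(T)$. $\overline{\mathbf{U}}(t)$ is the $t\times t$ backward identity matrix ($(i,j)$ entry $\delta_{i+j,t+1}$), $\overline{\mathbf{T}}(t)$ is the $t\times t$ forward shift matrix ($(i,j)$ entry $\delta_{j-i,1}$), and $\mathrm{ro}(T):=-T\,\overline{\mathbf{U}}(t)$. *)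

From HB Require Import structures.
From mathcomp Require Import all_boot all_order all_algebra.
Set Implicit Arguments. Unset Strict Implicit. Unset Printing Implicit Defensive.
Import Order.TTheory GRing.Theory Num.Theory.
Local Open Scope ring_scope.

(* Indices are 0-based: paper index e in {1..t} corresponds to j : 'I_t with j = e-1. *)

(* Basis matrix: row s (0 <= s <= t-1) is R^s = -1 on {1..s}, 1 elsewhere;
   in 0-based columns j, entry is -1 iff j < s. Row 0 is T^(+). *)
Definition Rmat (R : fieldType) (t : nat) : 'M[R]_t :=
  \matrix_(s < t, j < t) (if (j < s)%N then -1 else 1).

(* x(T): the unique coefficient vector with T = sum_i x_i R^(i-1) = x *m Rmat. *)
Definition xvec (R : fieldType) (t : nat) (T : 'rV[R]_t) : 'rV[R]_t :=
  T *m invmx (Rmat R t).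

Definition qf (R : fieldType) (t : nat) (T : 'rV[R]_t) : nat :=
  #|[set i : 'I_t | xvec T 0 i != 0]|.

Definition Ubar (R : fieldType) (t : nat) : 'M[R]_t :=
  \matrix_(i < t, j < t) ((i + j)%N == t.-1)%:R.

Definition Tbar (R : fieldType) (t : nat) : 'M[R]_t :=
  \matrix_(i < t, j < t) ((j : nat) == i.+1)%:R.

Definition ro (R : fieldType) (t : nat) (T : 'rV[R]_t) : 'rV[R]_t :=
  - (T *m Ubar R t).

Definition sigma1 (R : fieldType) (t : nat) : 'rV[R]_t :=
  \row_(j < t) ((j : nat) == 0%N)%:R.

Definition negends (R : fieldType) (t : nat) (T : 'rV[R]_t) : nat :=
  #|[set j : 'I_t | (T 0 j == -1) && (((j : nat) == 0%N) || ((j : nat) == t.-1))]|.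

From HB Require Import structures.
From mathcomp Require Import all_boot all_order all_algebra.
From mathcomp Require Import ring zify.
Import Order.TTheory GRing.Theory Num.Theory.
Local Open Scope ring_scope.

(* Columns j-1 and j of the basis R^0, ..., R^(t-1) differ only in row j, so
   T_j - T_(j-1) = 2 x_j for j >= 1 (0-based), while T_0 + T_(t-1) = 2 x_0.
   Reversing and negating T therefore negates x_0 and reverses x_1, ..., x_(t-1),
   which is the action of Ubar followed by Tbar away from the first coordinate;
   in particular q is preserved. For a sign vector, x_0 = 1 - k
   where k counts the entries -1 among T_0 and T_(t-1). *)

Section Coordinates.
Variable R : fieldType.
Hypothesis two_neq0 : 2 != 0 :> R.
Variable n : nat.

Lemma mulmx_Ubar t (y : 'rV[R]_t) j : (y *m Ubar R t) 0 j = y 0 (rev_ord j).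
Proof.
rewrite mxE (bigD1 (rev_ord j)) //= big1 ?addr0 => [|i ij].
  by rewrite mxE /= (_ : t - j.+1 + j = t.-1)%N ?eqxx ?mulr1 //; have := ltn_ord j; lia.
rewrite mxE; case: eqP => [ij_t|]; last by rewrite mulr0.
by case/eqP: ij; apply/val_inj => /=; have := ltn_ord j; lia.
Qed.

Lemma ro_entry t (T : 'rV[R]_t) j : ro T 0 j = - T 0 (rev_ord j).
Proof. by rewrite mxE mulmx_Ubar. Qed.

Lemma mulmx_Tbar0 (y : 'rV[R]_n.+1) : (y *m Tbar R n.+1) 0 ord0 = 0.
Proof. by rewrite mxE big1 // => i _; rewrite mxE mulr0. Qed.

Lemma mulmx_Tbar_lift (y : 'rV[R]_n.+1) (i : 'I_n) :
  (y *m Tbar R n.+1) 0 (lift ord0 i) = y 0 (widen_ord (leqnSn n) i).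
Proof.
rewrite mxE (bigD1 (widen_ord (leqnSn n) i)) //= big1 ?addr0 => [|k ki].
  by rewrite mxE /= eqxx mulr1.
rewrite mxE; case: eqP => [ik|]; last by rewrite mulr0.
by case/eqP: ki; apply/val_inj; move: ik => /= [].
Qed.

Lemma rev_ord_lift0 (i : 'I_n) :
  rev_ord (lift ord0 i) = widen_ord (leqnSn n) (rev_ord i).
Proof. by apply/val_inj; rewrite /= /bump leq0n; lia. Qed.

Lemma rev_ord_widen (i : 'I_n) :
  rev_ord (widen_ord (leqnSn n) i) = lift ord0 (rev_ord i).
Proof. by apply/val_inj; rewrite /= /bump leq0n; have := ltn_ord i; lia. Qed.

Definition xcoef (T : 'rV[R]_n.+1) : 'rV[R]_n.+1 :=
  \row_s if unlift ord0 s is Some i then (T 0 s - T 0 (widen_ord (leqnSn n) i)) / 2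
         else (T 0 ord0 + T 0 ord_max) / 2.

Lemma xcoefK (T : 'rV[R]_n.+1) : xcoef T *m Rmat R n.+1 = T.
Proof.
apply/rowP => j; rewrite !mxE big_ord_recl !mxE unlift_none /=.
have jn : (j <= n)%N by rewrite -ltnS.
pose f (k : nat) : R := T 0 (inord k).
have fE (k : 'I_n.+1) : T 0 k = f k by rewrite /f inord_val.
clearbody f.
pose F k := (f k.+1 - f k) / 2 * (if (j < k.+1)%N then -1 else 1).
rewrite (eq_bigr (fun i : 'I_n => F i)); last first.
  by move=> i _; rewrite !mxE liftK (fE (lift _ _)) (fE (widen_ord _ _)).
rewrite -(big_mkord xpredT F) (@big_cat_nat _ _ _ j) //=.
rewrite (@telescope_sumr_eq _ _ _ (fun k => f k / 2)) //; last first.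
  by move=> k /andP[_ kj]; rewrite /F ltnNge kj /=; ring.
rewrite (@telescope_sumr_eq _ _ _ (fun k => - f k / 2)) //; last first.
  by move=> k /andP[jk _]; rewrite /F ltnS jk /=; ring.
rewrite (fE ord0) (fE ord_max) (fE j) /=; field; exact: two_neq0.
Qed.

Lemma Rmat_unit : Rmat R n.+1 \in unitmx.
Proof.
have RmatV : (\matrix_i xcoef (row i 1%:M)) *m Rmat R n.+1 = 1%:M.
  by apply/row_matrixP => i; rewrite row_mul rowK xcoefK.
by case: (mulmx1_unit RmatV).
Qed.

Lemma xvecE (T : 'rV[R]_n.+1) : xvec T = xcoef T.
Proof. by rewrite /xvec -{1}(xcoefK T) -mulmxA mulmxV ?Rmat_unit // mulmx1. Qed.

Lemma xvec0 (T : 'rV[R]_n.+1) : xvec T 0 ord0 = (T 0 ord0 + T 0 ord_max) / 2.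
Proof. by rewrite xvecE mxE unlift_none. Qed.

Lemma xvec_lift (T : 'rV[R]_n.+1) (i : 'I_n) :
  xvec T 0 (lift ord0 i) = (T 0 (lift ord0 i) - T 0 (widen_ord (leqnSn n) i)) / 2.
Proof. by rewrite xvecE mxE liftK. Qed.

Lemma xvec_ro0 (T : 'rV[R]_n.+1) : xvec (ro T) 0 ord0 = - xvec T 0 ord0.
Proof.
rewrite !xvec0 !ro_entry.
have -> : rev_ord ord0 = ord_max :> 'I_n.+1 by apply/val_inj => /=; lia.
have -> : rev_ord ord_max = ord0 :> 'I_n.+1 by apply/val_inj => /=; lia.
field; exact: two_neq0.
Qed.

Lemma xvec_ro_lift (T : 'rV[R]_n.+1) (i : 'I_n) :
  xvec (ro T) 0 (lift ord0 i) = xvec T 0 (lift ord0 (rev_ord i)).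
Proof.
rewrite !xvec_lift !ro_entry rev_ord_lift0 rev_ord_widen.
field; exact: two_neq0.
Qed.

Lemma xvec_ro (T : 'rV[R]_n.+1) :
  xvec (ro T) = - xvec T 0 ord0 *: sigma1 R n.+1 + xvec T *m Ubar R n.+1 *m Tbar R n.+1.
Proof.
apply/rowP => j; rewrite [RHS]mxE [in RHS]mxE [sigma1 _ _ _ _]mxE.
case: (unliftP ord0 j) => [i|] -> /=.
  by rewrite xvec_ro_lift mulmx_Tbar_lift mulmx_Ubar rev_ord_widen mulr0 add0r.
by rewrite xvec_ro0 mulmx_Tbar0 mulr1 addr0.
Qed.

Definition flip_tail (j : 'I_n.+1) : 'I_n.+1 :=
  if unlift ord0 j is Some i then lift ord0 (rev_ord i) else ord0.

Lemma flip_tailK : involutive flip_tail.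
Proof.
move=> j; case: (unliftP ord0 j) => [i|] ->; rewrite /flip_tail.
  by rewrite !liftK rev_ordK.
by rewrite !unlift_none.
Qed.

Lemma qf_ro (T : 'rV[R]_n.+1) : qf (ro T) = qf T.
Proof.
rewrite /qf -(card_preimset [set i | xvec T 0 i != 0] (can_inj flip_tailK)).
apply: eq_card => j; rewrite !inE.
case: (unliftP ord0 j) => [i|] ->; rewrite /flip_tail ?liftK ?unlift_none.
  by rewrite xvec_ro_lift.
by rewrite xvec_ro0 oppr_eq0.
Qed.

Lemma negendsE (T : 'rV[R]_n.+1) : (0 < n)%N ->
  negends T = addn (T 0 ord0 == -1) (T 0 ord_max == -1).
Proof.
move=> n_gt0; rewrite /negends (cardsD1 ord0) (cardsD1 ord_max) !inE.
have maxN0 : (ord_max != ord0 :> 'I_n.+1) by rewrite -(inj_eq val_inj) -lt0n.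
rewrite maxN0 /= !eqxx orbT !andbT addnA -[RHS]addn0; congr (_ + _)%N.
apply: eq_card0 => j; rewrite !inE.
by rewrite -!(inj_eq val_inj) /=; case: eqP => //= _; case: eqP; rewrite ?andbF.
Qed.

Lemma xvec0_negends (T : 'rV[R]_n.+1) : (0 < n)%N ->
  (forall j, T 0 j = 1 \/ T 0 j = -1) -> xvec T 0 ord0 = 1 - (negends T)%:R.
Proof.
move=> n_gt0 T_pm1; rewrite xvec0 negendsE //.
have oneNN1 : (1 == -1 :> R) = false.
  by apply/negbTE; rewrite -subr_eq0 opprK.
by case: (T_pm1 ord0) => ->; case: (T_pm1 ord_max) => ->;
  rewrite ?eqxx ?oneNN1 /=; field; exact: two_neq0.
Qed.

End Coordinates.

Theorem corollary2p3 (R : realFieldType) (t : nat) (T : 'rV[R]_t) :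
  (3 <= t)%N ->
  (forall j : 'I_t, T 0 j = 1 \/ T 0 j = -1) ->
  qf (ro T) = qf T /\
  (negends T = 1%N -> xvec (ro T) = xvec T *m Ubar R t *m Tbar R t) /\
  (negends T = 2%N -> xvec (ro T) = sigma1 R t + xvec T *m Ubar R t *m Tbar R t) /\
  (negends T = 0%N -> xvec (ro T) = - sigma1 R t + xvec T *m Ubar R t *m Tbar R t).
Proof.
case: t T => [|n] T // t_ge3 T_pm1.
have n_gt0 : (0 < n)%N by lia.
have two_neq0 : 2 != 0 :> R by rewrite pnatr_eq0.
rewrite qf_ro // xvec_ro // xvec0_negends //.
split=> //; split; [|split] => ->.
- by rewrite subrr oppr0 scale0r add0r.
- by rewrite (_ : - (1 - 2%:R) = 1) ?scale1r //; ring.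
- by rewrite subr0 scaleN1r.
Qed.
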